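(* For any positive integers $n, q$ there exist an arena $\mathcal{A}$ (over a finite set of colors) with $n+3$ nodes, a node $u$ of $\mathcal{A}$, and a $q$-state strategy $S_1$ of Player 0 in $\mathcal{A}$ such that for every chromatic $Q$-state strategy $S_2$ of Player 0 in $\mathcal{A}$: if $\mathsf{col}(S_2,u)\subseteq\mathsf{col}(S_1,u)$, then $Q\ge q^n$.
   Context: An arena over a set of colors $C$ is a tuple $\mathcal{A} = \langle V, V_0, V_1, E\rangle$ of finite sets with $V = V_0 \sqcup V_1$, $E \subseteq V \times C \times V$, and every node having at least one outgoing edge; for $e=(s,c,t)$ write $\mathsf{source}(e)=s$, $\mathsf{col}(e)=c$, $\mathsf{target}(e)=t$. A path is a nonempty finite or infinite sequence of edges $e_1e_2\ldots$ with $\mathsf{target}(e_i)=\mathsf{source}(e_{i+1})$; for each node $v$ there is also a $0$-length path $\lambda_v$ with source and target $v$. $\mathsf{col}$ extends letterwise to sequences of edges. A strategy of Player 0 is a function $S$ assigning to each finite path $p$ with $\mathsf{target}(p)\in V_0$ an edge $S(p)$ with $\mathsf{source}(S(p))=\mathsf{target}(p)$. A path $p=e_1e_2\ldots$ is consistent with $S$ if (when $\mathsf{source}(p)\in V_0$) $e_1=S(\lambda_{\mathsf{source}(p)})$ and for each $1\le i<|p|$ with $\mathsf{target}(e_i)\in V_0$ we have $e_{i+1}=S(e_1\ldots e_i)$. For $v\in V$, $\mathsf{col}(S,v)\subseteq C^\omega$ is the set of $\mathsf{col}(p)$ over all infinite paths $p$ from $v$ consistent with $S$. A memory structure is $\mathcal{M}=\langle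 M, m_{init},\delta\rangle$ with $M$ finite, $m_{init}\in M$, $\delta: M\times E\to M$ (extended to finite edge sequences in the usual way). $S$ is an $\mathcal{M}$-strategy if for all finite paths $p_1,p_2$ with $\mathsf{target}(p_1)=\mathsf{target}(p_2)\in V_0$, $\delta(m_{init},p_1)=\delta(m_{init},p_2)$ implies $S(p_1)=S(p_2)$. $\mathcal{M}$ is chromatic if there is $\sigma: M\times C\to M$ with $\delta(m,e)=\sigma(m,\mathsf{col}(e))$ for all $m,e$. A (chromatic) $q$-state strategy is an $\mathcal{M}$-strategy for some (chromatic) memory structure $\mathcal{M}$ with $|M|=q$. *)

From mathcomp Require Import all_boot.
Set Implicit Arguments. Unset Strict Implicit. Unset Printing Implicit Defensive.

Section Arena.
Variables (V C : finType).

Definition edge := (V * C * V)%type.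
Definition source (e : edge) : V := e.1.1.
Definition ecol (e : edge) : C := e.1.2.
Definition target (e : edge) : V := e.2.

(* An arena <V, V0, V1, E>: V1 is the complement of V0;
   every node has at least one outgoing edge. *)
Definition is_arena (V0 : {set V}) (E : {set edge}) : Prop :=
  forall v : V, exists2 e, e \in E & source e = v.

(* A finite path is encoded as (v, s): its source node v and its edge list s
   (s = [::] encodes the 0-length path lambda_v). *)
Fixpoint is_fpath (E : {set edge}) (v : V) (s : seq edge) : Prop :=
  match s with
  | [::] => True
  | e :: s' => e \in E /\ source e = v /\ is_fpath E (target e) s'
  end.

Fixpoint ftarget (v : V) (s : seq edge) : V :=
  match s with
  | [::] => v
  | e :: s' => ftarget (target e) s'
  end.

Definition strat := V -> seq edge -> edge.

Definition is_strategy (V0 : {set V}) (E : {set edge}) (S : strat) : Prop :=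
  forall v s, is_fpath E v s -> ftarget v s \in V0 ->
    S v s \in E /\ source (S v s) = ftarget v s.

Definition is_ipath (E : {set edge}) (v : V) (p : nat -> edge) : Prop :=
  (forall i, p i \in E) /\ source (p 0) = v /\
  (forall i, target (p i) = source (p i.+1)).

Definition consistent (V0 : {set V}) (S : strat) (v : V) (p : nat -> edge) : Prop :=
  (v \in V0 -> p 0 = S v [::]) /\
  (forall i, target (p i) \in V0 -> p i.+1 = S v (mkseq p i.+1)).

Definition in_col (V0 : {set V}) (E : {set edge}) (S : strat) (v : V)
  (w : nat -> C) : Prop :=
  exists p, is_ipath E v p /\ consistent V0 S v p /\ forall i, w i = ecol (p i).

Definition delta_seq (M : Type) (delta : M -> edge -> M) (m : M) (s : seq edge) : M :=
  foldl delta m s.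

Definition is_M_strategy (V0 : {set V}) (E : {set edge}) (M : Type)
  (minit : M) (delta : M -> edge -> M) (S : strat) : Prop :=
  forall v1 s1 v2 s2, is_fpath E v1 s1 -> is_fpath E v2 s2 ->
    ftarget v1 s1 = ftarget v2 s2 -> ftarget v1 s1 \in V0 ->
    delta_seq delta minit s1 = delta_seq delta minit s2 -> S v1 s1 = S v2 s2.

Definition chromatic (E : {set edge}) (M : Type) (delta : M -> edge -> M) : Prop :=
  exists sigma : M -> C -> M, forall m e, e \in E -> delta m e = sigma m (ecol e).

Definition q_state_strategy (V0 : {set V}) (E : {set edge}) (S : strat) (q : nat) : Prop :=
  exists (M : finType) (minit : M) (delta : M -> edge -> M),
    #|M| = q /\ is_M_strategy V0 E minit delta S.

Definition chromatic_q_state_strategy (V0 : {set V}) (E : {set edge}) (S : strat)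
  (q : nat) : Prop :=
  exists (M : finType) (minit : M) (delta : M -> edge -> M),
    #|M| = q /\ chromatic E delta /\ is_M_strategy V0 E minit delta S.

End Arena.

From mathcomp Require Import all_boot.
Set Implicit Arguments. Unset Strict Implicit. Unset Printing Implicit Defensive.

(* From u, Player 1 moves to some v_i along an edge coloured by an arbitrary
   x : 'I_n -> 'I_q, then from v_i to w along the colour i; at w Player 0
   must answer with the colour x i, after which play stays in z forever.
   S1 answers correctly by remembering x i alone (q states).  A chromatic
   strategy only sees the colour x before it learns i, so its memory state
   after the first edge determines every x i, i.e. determines x: this gives
   an injection of the q ^ n functions x into its memory. *)

Section ChromaticMemory.
Variables (V C : finType) (V0 : {set V}) (E : {set edge V C}).

Lemma fpath_edges v s : is_fpath E v s -> all (mem E) s.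
Proof. by elim: s v => [|e s IHs] v //= [-> [_ /IHs]]. Qed.

Lemma chromatic_delta_seq (M : Type) (delta : M -> edge V C -> M)
    (sigma : M -> C -> M) m s :
  (forall m e, e \in E -> delta m e = sigma m (ecol e)) -> all (mem E) s ->
  delta_seq delta m s = foldl sigma m (map (@ecol V C) s).
Proof.
by move=> hsig; elim: s m => [|e s IHs] m //= /andP[he /IHs]; rewrite /delta_seq /= hsig.
Qed.

Lemma chromatic_strategy_move (M : Type) (minit : M)
    (delta : M -> edge V C -> M) (sigma : M -> C -> M) (S : strat V C)
    v1 s1 v2 s2 :
  is_M_strategy V0 E minit delta S ->
  (forall m e, e \in E -> delta m e = sigma m (ecol e)) ->
  is_fpath E v1 s1 -> is_fpath E v2 s2 ->
  ftarget v1 s1 = ftarget v2 s2 -> ftarget v1 s1 \in V0 ->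
  foldl sigma minit (map (@ecol V C) s1) = foldl sigma minit (map (@ecol V C) s2) ->
  S v1 s1 = S v2 s2.
Proof.
move=> hS hsig hp1 hp2 ht hV0 hcol; apply: hS => //.
by rewrite !(chromatic_delta_seq _ hsig) ?(fpath_edges hp1) ?(fpath_edges hp2).
Qed.

End ChromaticMemory.

Section Construction.
Variables (n q : nat).

Definition node : finType := option (option (option 'I_n)).
Definition color : finType := (({ffun 'I_n -> 'I_q} + 'I_n) + 'I_q)%type.

Definition u : node := None.
Definition w : node := Some None.
Definition z : node := Some (Some None).
Definition v (i : 'I_n) : node := Some (Some (Some i)).

(* The four cases are the edges u -> v_j, v_i -> w (coloured i), w -> z and z -> z. *)
Definition arena_edge (e : edge node color) : bool :=
  match e with
  | ((None, inl (inl _)), Some (Some (Some _))) => true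
  | ((Some (Some (Some i)), inl (inr j)), Some None) => i == j
  | ((Some None, inr _), Some (Some None)) => true
  | ((Some (Some None), inr _), Some (Some None)) => true
  | _ => false
  end.

Definition E : {set edge node color} := [set e | arena_edge e].
Definition V0 : {set node} := [set w].

Lemma card_node : #|node| = n + 3.
Proof. by rewrite !card_option card_ord addn3. Qed.

Lemma arena_E : 0 < n -> 0 < q -> is_arena V0 E.
Proof.
move=> hn hq; pose i0 := Ordinal hn; pose c0 := Ordinal hq.
case=> [[[i|]|]|].
- by exists ((v i, inl (inr i)), w); rewrite ?inE //= eqxx.
- by exists ((z, inr c0), z); rewrite ?inE.
- by exists ((w, inr c0), z); rewrite ?inE.
- by exists ((u, inl (inl [ffun=> c0])), v i0); rewrite ?inE.
Qed.

Lemma edge_from_u e x :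
  e \in E -> source e = u -> ecol e = inl (inl x) ->
  exists i, e = ((u, inl (inl x)), v i).
Proof.
rewrite inE; case: e => [[s c] t] /= + hs hc; rewrite /source /ecol /= in hs hc.
by subst s c; case: t => [[[i|]|]|] // _; exists i.
Qed.

Lemma edge_from_v e i j :
  e \in E -> source e = v i -> ecol e = inl (inr j) ->
  i = j /\ e = ((v i, inl (inr j)), w).
Proof.
rewrite inE; case: e => [[s c] t] /= + hs hc; rewrite /source /ecol /= in hs hc.
by subst s c; case: t => [[[k|]|]|] // /eqP ->.
Qed.

Lemma edge_from_w e :
  e \in E -> source e = w -> exists c, e = ((w, inr c), z).
Proof.
rewrite inE; case: e => [[s c] t] /= + hs; rewrite /source /= in hs; subst s.
by case: c => [[x|j]|c] //; case: t => [[[k|]|]|] // _; exists c.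
Qed.

Definition prefix (x : {ffun 'I_n -> 'I_q}) (i : 'I_n) : seq (edge node color) :=
  [:: ((u, inl (inl x)), v i); ((v i, inl (inr i)), w)].

Lemma fpath_prefix x i : is_fpath E u (prefix x i).
Proof. by rewrite /= !inE /= eqxx. Qed.

Definition remember (m : 'I_q) (e : edge node color) : 'I_q :=
  match e with
  | ((None, inl (inl x)), Some (Some (Some i))) => x i
  | _ => m
  end.

Definition S1 (m0 : 'I_q) : strat node color :=
  fun _ s => ((w, inr (delta_seq remember m0 s)), z).

Lemma strategy_S1 m0 : is_strategy V0 E (S1 m0).
Proof. by move=> v0 s _; rewrite inE => /eqP ->; rewrite inE. Qed.

Lemma q_state_S1 m0 : q_state_strategy V0 E (S1 m0) q.
Proof.
exists 'I_q, m0, remember; split; first by rewrite card_ord.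
by move=> v1 s1 v2 s2 _ _ _ _; rewrite /S1 => ->.
Qed.

Lemma S1_answers m0 x i col :
  in_col V0 E (S1 m0) u col -> col 0 = inl (inl x) -> col 1 = inl (inr i) ->
  col 2 = inr (x i).
Proof.
move=> [p [[hE [hp0 hadj]] [[_ hcons] hcol]]] hcol0 hcol1.
have [j pu] := edge_from_u (hE 0) hp0 (etrans (esym (hcol 0)) hcol0).
have hsrc1 : source (p 1) = v j by rewrite -hadj pu.
have [<- pv] := edge_from_v (hE 1) hsrc1 (etrans (esym (hcol 1)) hcol1).
by rewrite hcol hcons ?pv ?inE // /mkseq /= pu pv.
Qed.

Lemma S2_play (S2 : strat node color) x i :
  is_strategy V0 E S2 -> exists2 c, S2 u (prefix x i) = ((w, inr c), z) &
    in_col V0 E S2 u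
      (fun k => ecol (nth ((z, inr c), z) (rcons (prefix x i) ((w, inr c), z)) k)).
Proof.
move=> hS2; have [hE hsrc] := hS2 _ _ (fpath_prefix x i) (set11 _).
have [c hmove] := edge_from_w hE hsrc; exists c => //.
exists (nth ((z, inr c), z) (rcons (prefix x i) ((w, inr c), z))).
do !split.
- by case=> [|[|[|k]]]; rewrite /= ?nth_nil ?inE //= eqxx.
- by case=> [|[|[|k]]]; rewrite /= ?nth_nil.
- by rewrite inE.
- by case=> [|[|[|k]]]; rewrite /= ?nth_nil ?inE // hmove.
Qed.

Lemma S2_answers (S2 : strat node color) m0 x i :
  is_strategy V0 E S2 ->
  (forall col, in_col V0 E S2 u col -> in_col V0 E (S1 m0) u col) ->
  S2 u (prefix x i) = ((w, inr (x i)), z).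
Proof.
move=> hS2 hincl; have [c hmove /hincl play1] := S2_play x i hS2.
by have /= [<-] := S1_answers play1 erefl erefl; exact: hmove.
Qed.

End Construction.

Theorem theorem3 (n q : nat) : 0 < n -> 0 < q ->
  exists (V C : finType) (V0 : {set V}) (E : {set edge V C}),
    #|V| = n + 3 /\ is_arena V0 E /\
    exists (u : V) (S1 : strat V C),
      is_strategy V0 E S1 /\ q_state_strategy V0 E S1 q /\
      forall (Q : nat) (S2 : strat V C),
        is_strategy V0 E S2 -> chromatic_q_state_strategy V0 E S2 Q ->
        (forall w, in_col V0 E S2 u w -> in_col V0 E S1 u w) ->
        q ^ n <= Q.
Proof.
move=> hn hq; pose m0 := Ordinal hq.
exists (node n), (color n q), (V0 n), (E n q).
split; first exact: card_node.
split; first exact: arena_E.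
exists (u n), (@S1 n q m0); split; first exact: strategy_S1.
split; first exact: q_state_S1.
move=> Q S2 hS2 [M [minit [delta [<- [[sigma hsig] hM]]]]] hincl.
pose F x : M := sigma minit (inl (inl x)).
suff F_inj : injective F by have := leq_card F F_inj; rewrite card_ffun !card_ord.
move=> x y eqF; apply/ffunP => i.
have := chromatic_strategy_move hM hsig (fpath_prefix x i) (fpath_prefix y i)
  erefl (set11 _) (congr1 (sigma^~ _) eqF).
by rewrite !(S2_answers _ _ hS2 hincl) => -[].
Qed.
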